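(* Let $k$ be a non-negative integer, $m=4k+2$, and let $f$ be a natural number such that $\gcd(f,4m)=2$, $\gcd(f-1,4m)=1$, and $f^2+f-2\equiv 2m \pmod{4m}$. Then there exists a cyclic DCA$(4,4m+1;4m)$ satisfying P1 and P2.
   Context: Let $(G,+)$ be an abelian group of order $n$. A difference covering array DCA$(k,\eta;n)$ over $G$ is an $\eta\times k$ matrix $Q=[q(i,j)]$ (rows indexed $0,\dots,\eta-1$, columns $0,\dots,k-1$) with entries in $G$ such that for every pair of distinct columns $j,j'$ the multiset $\{q(i,j)-q(i,j') : 0\le i\le \eta-1\}$ contains every element of $G$ at least once. It is cyclic if $G=\mathbb{Z}_n$. A DCA$(k,n+1;n)$ is taken in normalized form: all entries of its last row (row $n$) and of its last column (column $k-1$) equal $0$. Such a DCA satisfies P1 if $0$ occurs at least twice in every column, and satisfies P2 if for all distinct columns $j,j'$ with $j\neq k-1\neq j'$, the set $\{q(i,j)-q(i,j') : 0\le i\le n-1\}$ equals $G\setminus\{0\}$. *)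

From mathcomp Require Import all_boot all_order all_algebra.
Set Implicit Arguments. Unset Strict Implicit. Unset Printing Implicit Defensive.
Import GRing.Theory.
Local Open Scope ring_scope.

Definition is_DCA (G : finZmodType) (k eta : nat) (Q : 'M[G]_(eta, k)) : Prop :=
  forall j j' : 'I_k, j != j' ->
    forall g : G, exists i : 'I_eta, Q i j - Q i j' = g.

Definition normalized (G : finZmodType) (k n : nat) (Q : 'M[G]_(n.+1, k)) : Prop :=
  (forall j : 'I_k, Q ord_max j = 0) /\
  (forall i : 'I_n.+1, forall j : 'I_k, (j : nat) = k.-1 -> Q i j = 0).

Definition P1 (G : finZmodType) (k eta : nat) (Q : 'M[G]_(eta, k)) : Prop :=
  forall j : 'I_k, (2 <= #|[set i : 'I_eta | Q i j == 0%R]|)%N.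

Definition P2 (G : finZmodType) (k n : nat) (Q : 'M[G]_(n.+1, k)) : Prop :=
  forall j j' : 'I_k, j != j' -> (j : nat) != k.-1 -> (j' : nat) != k.-1 ->
    [set Q i j - Q i j' | i : 'I_n.+1 & ((i : nat) < n)%N] = [set g : G | g != 0].

From mathcomp Require Import all_boot all_order all_algebra.
From mathcomp Require Import zify ring.
Import GRing.Theory.
Local Open Scope ring_scope.

(* Write n = 4m and M for the class of m in Z_n; as m = 2 (mod 4), 4M = 0 and
   M^2 = 2M. On the rows x < n, columns 0, 1, 2 have the form u * psi(x) with u
   a unit and psi injective modulo n, so each column runs through Z_n. The
   difference of two of them has the form u' * delta(x) with u' one of 2M - 3, 3,
   3 - M, and delta maps [0, n) into [1, n) injectively up to a single collision,
   hence onto [1, n). When 3 does not divide m these u' are units, so every such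
   difference runs through the nonzero residues exactly as P2 demands; the zero
   last row and last column supply the rest. The hypotheses on f serve only to
   exclude 3 | m: f^2 + f - 2 = (f - 1)(f + 2) with f + 2 = f - 1 (mod 3), so
   3 | 2m would give 3 | gcd(f - 1, 4m) = 1. *)

Lemma imset_eq_card (aT rT : finType) (f : aT -> rT) (A : {pred aT}) (B : {set rT}) :
  {in A &, injective f} -> f @: A \subset B -> #|B| = #|A| -> f @: A = B.
Proof. by move=> /card_in_imset imA sAB cardB; apply/eqP; rewrite eqEcard sAB cardB imA leqnn. Qed.

Lemma imset_ord_ltn (T : finType) n (F : nat -> T) :
  [set F i | i : 'I_n.+1 & (i < n)%N] = [set F i | i : 'I_n].
Proof.
apply/setP => g; apply/imsetP/imsetP => -[i Hi ->].
  by rewrite inE in Hi; exists (Ordinal Hi).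
by exists (widen_ord (leqnSn n) i); rewrite ?inE /=.
Qed.

Lemma imset_opp_nonzero (T : finType) (G : finZmodType) (F : T -> G) :
  [set F x | x : T] = [set g | g != 0] -> [set - F x | x : T] = [set g | g != 0].
Proof.
move=> /setP imF; apply/setP => g; rewrite inE -oppr_eq0.
have := imF (- g); rewrite inE => <-.
apply/imsetP/imsetP => -[x _ e]; exists x => //.
  by rewrite e opprK.
by rewrite -e opprK.
Qed.

Lemma eq_mod_lt_double n a b : a = b %[mod n] -> (a < 2 * n)%N -> (b < 2 * n)%N ->
  a = b \/ a = (b + n)%N \/ b = (a + n)%N.
Proof.
move=> e a_lt b_lt; have n_gt0 : (0 < n)%N by lia.
have qa : (a %/ n < 2)%N by rewrite ltn_divLR // mulnC.
have qb : (b %/ n < 2)%N by rewrite ltn_divLR // mulnC.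
rewrite (divn_eq a n) (divn_eq b n) e.
by case: (a %/ n)%N qa => [|[|//]] _; case: (b %/ n)%N qb => [|[|//]] _; lia.
Qed.

Section ZpImage.
Variables (n : nat) (n_gt1 : (1 < n)%N).

Lemma Zp_natr_eq a b : ((a%:R : 'Z_n) == b%:R) = (a == b %[mod n]).
Proof. by rewrite -val_eqE /= !val_Zp_nat. Qed.

Variables (F : nat -> 'Z_n) (u : 'Z_n) (psi : nat -> nat).
Hypotheses (u_unit : u \is a GRing.unit) (F_def : forall x, (x < n)%N -> F x = u * (psi x)%:R).

Lemma image_scaled_mod_inj :
  (forall x y, (x < n)%N -> (y < n)%N -> psi x = psi y %[mod n] -> x = y) ->
  [set F x | x : 'I_n] = setT.
Proof.
move=> psi_inj; apply: imset_eq_card; rewrite ?subsetT ?cardsT ?card_ord ?Zp_cast //.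
move=> x y _ _; rewrite !F_def // => /(mulrI u_unit)/eqP.
by rewrite Zp_natr_eq => /eqP/psi_inj e; apply: val_inj; apply: e.
Qed.

Lemma image_scaled_nonzero x0 : (x0 < n)%N ->
  (forall x, (x < n)%N -> 0 < psi x < n)%N ->
  (forall x y, (x < n)%N -> (y < n)%N -> x != x0 -> y != x0 -> psi x = psi y -> x = y) ->
  [set F x | x : 'I_n] = [set g | g != 0].
Proof.
move=> x0_lt psi_range psi_inj; set Z := [set g | g != 0].
have F_nz (x : 'I_n) : F x \in Z.
  rewrite inE F_def // -(mulr0 u) (inj_eq (mulrI u_unit)) -(mulr0n 1) Zp_natr_eq mod0n.
  by rewrite modn_small; have := psi_range x (ltn_ord x); lia.
have cardZ : #|Z| = #|[set~ Ordinal x0_lt]|.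
  have -> : Z = [set~ 0] by apply/setP => g; rewrite !inE.
  by rewrite !cardsC1 !card_ord Zp_cast.
have imZ : [set F x | x : 'I_n in [set~ Ordinal x0_lt]] = Z.
  apply: imset_eq_card => //; last by apply/subsetP => _ /imsetP[x _ ->]; apply: F_nz.
  move=> x y; rewrite !inE -!val_eqE /= => x_ne y_ne.
  rewrite !F_def // => /(mulrI u_unit)/eqP; rewrite Zp_natr_eq !modn_small.
  - by move=> /eqP/psi_inj e; apply: val_inj; apply: e.
  - by have := psi_range y (ltn_ord y); lia.
  - by have := psi_range x (ltn_ord x); lia.
apply/eqP; rewrite eqEsubset; apply/andP; split.
  by apply/subsetP => _ /imsetP[x _ ->]; apply: F_nz.
by apply/subsetP => g; rewrite -imZ => /imsetP[x _ ->]; apply/imsetP; exists x.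
Qed.

End ZpImage.

Lemma not_3_dvd_of_congr m f : (0 < m)%N -> gcdn f.-1 (4 * m) = 1%N ->
  (f ^ 2 + f - 2 = 2 * m %[mod 4 * m])%N -> ~~ (3 %| m)%N.
Proof.
move=> m_gt0 cop congr_f; apply/negP => dvd3m.
have dvd3n : (3 %| 4 * m)%N by rewrite dvdn_mull.
have f_gt0 : (0 < f)%N by case: f cop {congr_f} => //; rewrite gcd0n; lia.
have : (3 %| f.-1 * (f.-1 + 3))%N.
  have -> : (f.-1 * (f.-1 + 3) = f ^ 2 + f - 2)%N by case: f f_gt0 {cop congr_f} => // f _; nia.
  by rewrite /dvdn -(modn_dvdm _ dvd3n) congr_f modn_dvdm // -/(dvdn 3 _) dvdn_mull.
rewrite Euclid_dvdM // dvdn_addl // orbb => dvd3f.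
have : (3 %| gcdn f.-1 (4 * m))%N by rewrite dvdn_gcd dvd3f.
by rewrite cop.
Qed.

Section Construction.
Variable m : nat.
Hypothesis m_mod4 : (m %% 4 = 2)%N.

Local Notation n := (4 * m)%N.
Local Notation M := (m%:R : 'Z_n).

Lemma n_gt1 : (1 < n)%N. Proof. lia. Qed.

Lemma mulr4M : 4 * M = 0.
Proof. by rewrite -natrM pchar_Zp ?n_gt1. Qed.

Lemma mulMM : M * M = 2 * M.
Proof.
rewrite -!natrM; apply/eqP; rewrite Zp_natr_eq ?n_gt1 //.
have -> : (m * m = m %/ 4 * n + 2 * m)%N.
  by rewrite {1}(divn_eq m 4) m_mod4; set q := (m %/ 4)%N; nia.
by rewrite modnMDl.
Qed.

(* [ring] cannot compute modulo the relations 4M = 0 and M^2 = 2M, so each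
   identity below names the multiples [a] and [b] of them by which its sides differ. *)
Lemma eq_modM (a b X Y : 'Z_n) : X - Y = a * (M * M - 2 * M) + b * (4 * M) -> X = Y.
Proof. by rewrite mulMM mulr4M subrr !mulr0 addr0 => /eqP; rewrite subr_eq0 => /eqP. Qed.

Lemma unit_M_sub1 : M - 1 \is a GRing.unit.
Proof. by apply/unitrP; exists (M - 1); split; apply: (eq_modM 1 0); ring. Qed.

Lemma unit_1_addM : 1 + M \is a GRing.unit.
Proof. by apply/unitrP; exists (1 + M); split; apply: (eq_modM 1 1); ring. Qed.

Hypothesis m_not3 : ~~ (3 %| m)%N.

Lemma unit_3 : (3 : 'Z_n) \is a GRing.unit.
Proof. by rewrite (unitZpE 3 n_gt1) coprime_sym prime_coprime // Gauss_dvdr. Qed.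

Lemma unit_3_subM : 3 - M \is a GRing.unit.
Proof.
have -> : 3 - M = 3 * (1 + M) by apply: (eq_modM 0 (-1)); ring.
by rewrite unitrM unit_3 unit_1_addM.
Qed.

Lemma unit_2M_sub3 : 2 * M - 3 \is a GRing.unit.
Proof.
have -> : 2 * M - 3 = (M - 1) * (3 - M) by apply: (eq_modM 1 0); ring.
by rewrite unitrM unit_M_sub1 unit_3_subM.
Qed.

Definition quarterly (F : nat -> nat -> nat) (x : nat) : nat := F (x %/ m)%N (x %% m)%N.

Lemma quarterlyE F q i : (i < m)%N -> quarterly F (q * m + i) = F q i.
Proof.
move=> lt_im; have m_gt0 : (0 < m)%N by lia.
by rewrite /quarterly divnMDl // divn_small // addn0 modnMDl modn_small.
Qed.

Lemma quarterP x : (x < n)%N -> exists q i, [/\ (q < 4)%N, (i < m)%N & x = (q * m + i)%N].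
Proof.
move=> lt_xn; have m_gt0 : (0 < m)%N by lia.
exists (x %/ m)%N, (x %% m)%N; split; rewrite -?divn_eq ?ltn_pmod //.
by rewrite ltn_divLR // mulnC.
Qed.

Definition psi1 (q i : nat) : nat :=
  (match q with 0 => 2 * i + 3 * m + 3 | 1 => 2 * i + 5 * m + 3 | 2 => 2 * i | _ => 2 * i + 2 * m end)%N.
Definition psi2 (q i : nat) : nat :=
  (match q with 0 => 4 * i + 3 | 1 => 4 * i + 3 * m | 2 => 4 * i + m + 3 | _ => 4 * i end)%N.
Definition delta10 (q i : nat) : nat :=
  (match q with 0 => i + 1 | 1 => i + m + 1 | 2 => i + 2 * m | _ => i + 3 * m end)%N.
Definition delta20 (q i : nat) : nat :=
  (match q with 0 => i + 1 | 1 => i + 2 * m | 2 => i + m + 1 | _ => i + 3 * m end)%N.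
Definition delta21 (q i : nat) : nat :=
  (match q with 0 => 2 * i + 2 | 1 => 2 * i + 1 | 2 => 2 * i + 2 * m + 1 | _ => 2 * i + 2 * m end)%N.

Definition column (j x : nat) : 'Z_n :=
  match j with
  | 0 => x%:R
  | 1 => (M - 1) * (quarterly psi1 x)%:R
  | 2 => (quarterly psi2 x)%:R
  | _ => 0
  end.

Lemma column1_sub0 x : (x < n)%N ->
  column 1 x - column 0 x = (2 * M - 3) * (quarterly delta10 x)%:R.
Proof.
case/quarterP => q [i [lt_q4 lt_im ->]]; rewrite /column !quarterlyE //.
case: q lt_q4 => [|[|[|[|//]]]] _ /=; rewrite ?natrD ?natrM.
- by apply: (eq_modM 3 1); ring.
- by apply: (eq_modM 3 1); ring.
- by apply: (eq_modM (-4) (-1)); ring.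
- by apply: (eq_modM (-4) (-1)); ring.
Qed.

Lemma column2_sub0 x : (x < n)%N ->
  column 2 x - column 0 x = 3 * (quarterly delta20 x)%:R.
Proof.
case/quarterP => q [i [lt_q4 lt_im ->]]; rewrite /column !quarterlyE //.
case: q lt_q4 => [|[|[|[|//]]]] _ /=; rewrite ?natrD ?natrM.
- by apply: (eq_modM 0 0); ring.
- by apply: (eq_modM 0 (-1)); ring.
- by apply: (eq_modM 0 (-1)); ring.
- by apply: (eq_modM 0 (-3)); ring.
Qed.

Lemma column2_sub1 x : (x < n)%N ->
  column 2 x - column 1 x = (3 - M) * (quarterly delta21 x)%:R.
Proof.
case/quarterP => q [i [lt_q4 lt_im ->]]; rewrite /column !quarterlyE //.
case: q lt_q4 => [|[|[|[|//]]]] _ /=; rewrite ?natrD ?natrM.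
- by apply: (eq_modM (-3) (-1)); ring.
- by apply: (eq_modM (-5) (-1)); ring.
- by apply: (eq_modM 2 0); ring.
- by apply: (eq_modM 0 (-1)); ring.
Qed.

Local Ltac split_quarters :=
  repeat (let q := fresh "q" in let i := fresh "i" in
          move=> /quarterP[q [i [+ ? ->]]]; case: q => [|[|[|[|//]]]] _);
  rewrite ?quarterlyE //=.

Lemma psi1_inj_mod x y : (x < n)%N -> (y < n)%N ->
  quarterly psi1 x = quarterly psi1 y %[mod n] -> x = y.
Proof. by split_quarters; move/eq_mod_lt_double; lia. Qed.

Lemma psi2_inj_mod x y : (x < n)%N -> (y < n)%N ->
  quarterly psi2 x = quarterly psi2 y %[mod n] -> x = y.
Proof. by split_quarters; move/eq_mod_lt_double; lia. Qed.

Lemma delta10_range x : (x < n)%N -> (0 < quarterly delta10 x < n)%N.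
Proof. by split_quarters; lia. Qed.

Lemma delta10_inj x y : (x < n)%N -> (y < n)%N -> x != (2 * m).-1 -> y != (2 * m).-1 ->
  quarterly delta10 x = quarterly delta10 y -> x = y.
Proof. by split_quarters; lia. Qed.

Lemma delta20_range x : (x < n)%N -> (0 < quarterly delta20 x < n)%N.
Proof. by split_quarters; lia. Qed.

Lemma delta20_inj x y : (x < n)%N -> (y < n)%N -> x != m -> y != m ->
  quarterly delta20 x = quarterly delta20 y -> x = y.
Proof. by split_quarters; lia. Qed.

Lemma delta21_range x : (x < n)%N -> (0 < quarterly delta21 x < n)%N.
Proof. by split_quarters; lia. Qed.

Lemma delta21_inj x y : (x < n)%N -> (y < n)%N -> x != (3 * m)%N -> y != (3 * m)%N ->
  quarterly delta21 x = quarterly delta21 y -> x = y.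
Proof. by split_quarters; lia. Qed.

Lemma column_image j : (j < 3)%N -> [set column j x | x : 'I_n] = setT.
Proof.
case: j => [|[|[|//]]] _.
- apply: (@image_scaled_mod_inj _ n_gt1 _ 1 id (unitr1 _)) => [x _ | x y x_lt y_lt].
    by rewrite mul1r.
  by rewrite !modn_small.
- exact: (@image_scaled_mod_inj _ n_gt1 _ _ _ unit_M_sub1 (fun _ _ => erefl) psi1_inj_mod).
- apply: (@image_scaled_mod_inj _ n_gt1 _ 1 _ (unitr1 _) _ psi2_inj_mod) => x _.
  by rewrite mul1r.
Qed.

Lemma column_sub_image j j' : (j < 3)%N -> (j' < 3)%N -> j != j' ->
  [set column j x - column j' x | x : 'I_n] = [set g | g != 0].
Proof.
wlog lt_j'j : j j' / (j' < j)%N => [gen lt_j3 lt_j'3 ne_jj'|].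
  case: (ltngtP j j') ne_jj' => // [lt_jj'|lt_j'j] _; last by apply: gen; rewrite // gtn_eqF.
  under eq_imset do rewrite -opprB.
  by apply: imset_opp_nonzero; apply: gen; rewrite // gtn_eqF.
case: j lt_j'j => [|[|[|//]]] //; case: j' => [|[|//]] // _ _ _ _.
- have x0_lt : ((2 * m).-1 < n)%N by lia.
  exact: (@image_scaled_nonzero _ n_gt1 _ _ _ unit_2M_sub3 column1_sub0 _ x0_lt delta10_range delta10_inj).
- have x0_lt : (m < n)%N by lia.
  exact: (@image_scaled_nonzero _ n_gt1 _ _ _ unit_3 column2_sub0 _ x0_lt delta20_range delta20_inj).
- have x0_lt : (3 * m < n)%N by lia.
  exact: (@image_scaled_nonzero _ n_gt1 _ _ _ unit_3_subM column2_sub1 _ x0_lt delta21_range delta21_inj).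
Qed.

Lemma column_zero j : exists2 z, (z < n)%N & column j z = 0.
Proof.
case: j => [|[|[|j]]].
- by exists 0%N; [lia | rewrite /column mulr0n].
- by exists (2 * m + 0)%N; [lia | rewrite /column quarterlyE ?mulr0 //; lia].
- by exists (3 * m + 0)%N; [lia | rewrite /column quarterlyE //; lia].
- by exists 0%N; [lia | ].
Qed.

Lemma column_ge3 j x : (3 <= j)%N -> column j x = 0.
Proof. by case: j => [|[|[|j]]]. Qed.

Definition dca : 'M['Z_n]_(n.+1, 4) := \matrix_(r, j) if (r < n)%N then column j r else 0.

Lemma dca_ge3 r (j : 'I_4) : (3 <= j)%N -> dca r j = 0.
Proof. by move=> ge_j3; rewrite mxE column_ge3 //; case: ifP. Qed.

Lemma dca_normalized : normalized dca.
Proof. by split=> [j | r j j3]; [rewrite mxE ltnn | rewrite dca_ge3 // j3]. Qed.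

Lemma dca_P1 : P1 dca.
Proof.
move=> j; have [z lt_zn col_z] := column_zero j.
pose z' : 'I_n.+1 := widen_ord (leqnSn n) (Ordinal lt_zn).
have zeros_j : [set ord_max; z'] \subset [set r | dca r j == 0].
  by apply/subsetP => r; rewrite !inE mxE => /orP[]/eqP-> /=; rewrite ?ltnn ?lt_zn ?col_z.
apply: leq_trans (subset_leq_card zeros_j).
by rewrite cards2 -val_eqE /= gtn_eqF.
Qed.

Lemma ltn3_of_neq {j : 'I_4} : (j : nat) != 3 -> (j < 3)%N.
Proof. by case: j => [[|[|[|[|]]]]]. Qed.

Lemma dca_P2 : P2 dca.
Proof.
move=> j j' ne_jj' j3 j'3.
rewrite -(column_sub_image _ _ (ltn3_of_neq j3) (ltn3_of_neq j'3) ne_jj').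
rewrite -(imset_ord_ltn _ _ (fun x => column j x - column j' x)).
by apply: eq_in_imset => r; rewrite inE => lt_rn; rewrite !mxE lt_rn.
Qed.

Lemma dca_column_onto {j : 'I_4} g : (j < 3)%N -> exists r, dca r j = g.
Proof.
move=> lt_j3; have : g \in [set column j x | x : 'I_n] by rewrite column_image.
by case/imsetP => x _ ->; exists (widen_ord (leqnSn n) x); rewrite mxE /= ltn_ord.
Qed.

Lemma dca_is_DCA : is_DCA dca.
Proof.
move=> j j' ne_jj' g.
case: (ltnP j 3) => [lt_j3 | ge_j3]; case: (ltnP j' 3) => [lt_j'3 | ge_j'3].
- have [-> | nz_g] := eqVneq g 0; first by exists ord_max; rewrite !mxE ltnn subrr.
  have : g \in [set dca r j - dca r j' | r : 'I_n.+1 & (r < n)%N].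
    by rewrite (dca_P2 _ _ ne_jj') ?inE ?ltn_eqF.
  by case/imsetP => r _ ->; exists r.
- by have [r <-] := dca_column_onto g lt_j3; exists r; rewrite (dca_ge3 _ _ ge_j'3) subr0.
- have [r e] := dca_column_onto (- g) lt_j'3.
  by exists r; rewrite (dca_ge3 _ _ ge_j3) e sub0r opprK.
- by move: ne_jj' (ltn_ord j) (ltn_ord j'); rewrite -val_eqE /=; lia.
Qed.

End Construction.

Theorem mainTheorem3 (k f : nat) :
  let m := (4 * k + 2)%N in
  gcdn f (4 * m) = 2%N ->
  gcdn f.-1 (4 * m) = 1%N ->
  (f ^ 2 + f - 2 = 2 * m %[mod 4 * m])%N ->
  exists Q : 'M['Z_(4 * m)]_((4 * m).+1, 4),
    [/\ is_DCA Q, normalized Q, P1 Q & P2 Q].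
Proof.
move=> m _ cop congr_f.
have m_mod4 : (m %% 4 = 2)%N by rewrite /m; lia.
have m_not3 : ~~ (3 %| m)%N by apply: not_3_dvd_of_congr cop congr_f; lia.
exists (dca m); split.
- exact: dca_is_DCA.
- exact: dca_normalized.
- exact: dca_P1.
- exact: dca_P2.
Qed.
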